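(* Let $s\geq 2$ and let $G$ be either $G_{(s,0)}$ or $G_{(s,s)}$, acting faithfully and transitively on a set of $n$ points. Let $T=\langle u,v\rangle$ if $G=G_{(s,0)}$ and $T=\langle g,h\rangle$ if $G=G_{(s,s)}$. If $T$ is transitive, then $G=G_{(s,0)}$ and $n=s^2$.
   Context: $G_{(s,0)}$ is the Coxeter group $[3,3,3]=\langle\rho_0,\rho_1,\rho_2\mid \rho_i^2=1,\ (\rho_i\rho_j)^3=1\ (i\neq j)\rangle$ factored by $(\rho_0\rho_1\rho_2\rho_1)^s$ (group of the toroidal hypermap $(3,3,3)_{(s,0)}$); $G_{(s,s)}$ is $[3,3,3]$ factored by $(\rho_0\rho_1\rho_2)^{2s}$ (group of $(3,3,3)_{(s,s)}$). Translations: $u=\rho_0\rho_1\rho_2\rho_1$, $v=\rho_1 u\rho_1=\rho_1\rho_0\rho_1\rho_2$; $g=(\rho_0\rho_1\rho_2)^2$, $h=\rho_0 g\rho_0$. In each case $T$ is a normal abelian subgroup (the translation subgroup) of order $s^2$. *)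

From mathcomp Require Import all_boot all_fingroup.
Set Implicit Arguments.
Unset Strict Implicit.
Unset Printing Implicit Defensive.
Local Open Scope group_scope.

Definition gen3 (gT : finGroupType) (a b c : gT) : {group gT} :=
  <<[set a; b; c]>>%G.

Definition coxeter333_rel (gT : finGroupType) (a b c : gT) : Prop :=
  [/\ a ^+ 2 = 1, b ^+ 2 = 1 & c ^+ 2 = 1] /\
  [/\ (a * b) ^+ 3 = 1, (a * c) ^+ 3 = 1 & (b * c) ^+ 3 = 1].

Definition tr_u (gT : finGroupType) (a b c : gT) : gT := a * b * c * b.
Definition tr_v (gT : finGroupType) (a b c : gT) : gT := b * a * b * c.
Definition tr_g (gT : finGroupType) (a b c : gT) : gT := (a * b * c) ^+ 2.
Definition tr_h (gT : finGroupType) (a b c : gT) : gT := a * tr_g a b c * a.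

(* (a,b,c) are the images of (rho0,rho1,rho2) under an isomorphism from
   G_(s,0) onto the group they generate: the relations hold for (a,b,c)
   and the generated group is isomorphic to the presented group. *)
Definition is_G_s0 (s : nat) (gT : finGroupType) (a b c : gT) : Prop :=
  [/\ coxeter333_rel a b c, (tr_u a b c) ^+ s = 1 &
      gen3 a b c \isog Grp (x : y : z :
        (x ^+ 2, y ^+ 2, z ^+ 2, (x * y) ^+ 3, (x * z) ^+ 3, (y * z) ^+ 3,
         (x * y * z * y) ^+ s))].

Definition is_G_ss (s : nat) (gT : finGroupType) (a b c : gT) : Prop :=
  [/\ coxeter333_rel a b c, (a * b * c) ^+ (2 * s)%N = 1 &
      gen3 a b c \isog Grp (x : y : z :
        (x ^+ 2, y ^+ 2, z ^+ 2, (x * y) ^+ 3, (x * z) ^+ 3, (y * z) ^+ 3,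
         (x * y * z) ^+ (2 * s)%N))].

From mathcomp Require Import all_boot all_fingroup ssralg zmodp cyclic.
From mathcomp Require Import ring.
Set Implicit Arguments. Unset Strict Implicit. Unset Printing Implicit Defensive.
Import GRing.Theory.
Local Open Scope group_scope.

(* In [3,3,3] the translations satisfy uv = vu = g, v = u^b and
   h u^2 = v, so <g,h> <= <u,v> and both are abelian.  The universal property
   of the presented groups is obtained through the diagonal subgroup
   <(a,x),(b,y),(c,z)> of G x M: it is a quotient of G projecting onto G, so
   the projection is injective and a,b,c |-> x,y,z extends to a morphism.  In the affine model of G_(s,0) on (Z/s)^2 the
   translations are transitive on s^2 points, which with u^s = v^s = 1 gives
   |<u,v>| = s^2 in G_(s,0), hence n = s^2 by regularity.  In the degenerate
   model (a,a,c) in S_3 of G_(s,s), g = h = 1 but u <> 1, so u is not in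
   <g,h>; yet a transitive abelian <g,h> would contain u, which centralises it. *)

Section Involutions.
Variable gT : finGroupType.

Lemma invg_invol (x : gT) : x ^+ 2 = 1 -> x^-1 = x.
Proof. by move=> x2; apply/eqP; rewrite eq_invg_mul -expg2 x2. Qed.

Lemma invol_cancel (x t : gT) : x ^+ 2 = 1 -> x * (x * t) = t.
Proof. by move=> x2; rewrite mulgA -expg2 x2 mul1g. Qed.

Lemma braid (x y t : gT) : x ^+ 2 = 1 -> y ^+ 2 = 1 -> (x * y) ^+ 3 = 1 ->
  x * (y * (x * t)) = y * (x * (y * t)).
Proof.
move=> x2 y2 xy3.
have xyx_yxy : (x * y * x) * (y * x * y) = 1.
  by rewrite -xy3 !expgS expg0 mulg1 !mulgA.
have : (x * y * x)^-1 = y * x * y by apply/eqP; rewrite eq_invg_mul xyx_yxy.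
by rewrite !invMg !invg_invol // mulgA => E; rewrite !mulgA E.
Qed.

End Involutions.

(* Generated groups as joins of cyclic groups, the form used by the
   presentation predicates. *)
Lemma gen2E (gT : finGroupType) (u v : gT) : <<[set u; v]>> = <[u]> <*> <[v]>.
Proof. by rewrite joing_idl joing_idr. Qed.

Lemma gen3E (gT : finGroupType) (a b c : gT) :
  <<[set a; b; c]>> = <[a]> <*> <[b]> <*> <[c]>.
Proof. by rewrite -gen2E joing_idl joing_idr joingE -setUA. Qed.

Lemma gen3_mem (gT : finGroupType) (a b c : gT) :
  [/\ a \in gen3 a b c, b \in gen3 a b c & c \in gen3 a b c].
Proof. by split; rewrite mem_gen // !inE eqxx ?orbT. Qed.

Lemma morphim_gen2 (gT mT : finGroupType) (D : {group gT})
    (phi : {morphism D >-> mT}) (w1 w2 : gT) :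
  w1 \in D -> w2 \in D -> phi @* <<[set w1; w2]>> = <<[set phi w1; phi w2]>>.
Proof.
move=> Dw1 Dw2; rewrite morphim_gen ?subUset ?sub1set ?Dw1 ?Dw2 //.
by rewrite morphimU !morphim_set1.
Qed.

Lemma card_gen2_commute (gT : finGroupType) (u v : gT) :
  commute u v -> #|<<[set u; v]>>| <= (#[u] * #[v])%N.
Proof.
move=> cuv; rewrite gen2E cent_joinEl ?cents_cycle //.
by rewrite mul_cardG leq_pmulr ?cardG_gt0.
Qed.

Section Translations.
Variables (gT : finGroupType) (a b c : gT).
Hypothesis rel : coxeter333_rel a b c.

Local Notation u := (tr_u a b c).
Local Notation v := (tr_v a b c).
Local Notation g := (tr_g a b c).
Local Notation h := (tr_h a b c).

Let a2 : a ^+ 2 = 1. Proof. by case: rel => -[]. Qed.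
Let b2 : b ^+ 2 = 1. Proof. by case: rel => -[]. Qed.
Let c2 : c ^+ 2 = 1. Proof. by case: rel => -[]. Qed.
Let Ia t := invol_cancel t a2.
Let Ib t := invol_cancel t b2.
Let Ic t := invol_cancel t c2.
Let Bab t : a * (b * (a * t)) = b * (a * (b * t)).
Proof. by case: rel => -[? ? _] [? _ _]; apply: braid. Qed.
Let Bac t : a * (c * (a * t)) = c * (a * (c * t)).
Proof. by case: rel => -[? _ ?] [_ ? _]; apply: braid. Qed.
Let Bbc t : b * (c * (b * t)) = c * (b * (c * t)).
Proof. by case: rel => -[_ ? ?] [_ _ ?]; apply: braid. Qed.

Lemma tr_uv_comm : u * v = v * u.
Proof.
rewrite /tr_u /tr_v -[LHS]mulg1 -[RHS]mulg1 -!mulgA.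
by rewrite [in LHS]Ib -[in RHS]Bab [in RHS]Bbc [in RHS]Bac [in RHS]Ic.
Qed.

Lemma tr_g_uv : g = u * v.
Proof.
by rewrite /tr_g /tr_u /tr_v expg2 -[LHS]mulg1 -[RHS]mulg1 -!mulgA [in RHS]Ib.
Qed.

Lemma tr_v_conj : v = u ^ b.
Proof.
rewrite /conjg (invg_invol b2) /tr_u /tr_v -[LHS]mulg1 -[RHS]mulg1 -!mulgA.
by rewrite [in RHS]Ib.
Qed.

Lemma tr_huu : h * u * u = v.
Proof.
rewrite /tr_h /tr_g /tr_u /tr_v expg2 -[LHS]mulg1 -[RHS]mulg1 -!mulgA.
rewrite [in LHS]Ia [in LHS]Ia [in LHS]Bbc [in LHS]Ic [in LHS]Ib -[in LHS]Bac.
by rewrite [in LHS]Ia -[in LHS]Bbc [in LHS]Ib.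
Qed.

Lemma translations_abelian : abelian <<[set u; v]>>.
Proof.
rewrite abelian_gen; apply/centsP => p; rewrite !inE => /orP[]/eqP-> q;
  by rewrite !inE => /orP[]/eqP-> //; rewrite /commute tr_uv_comm.
Qed.

Lemma tr_gh_sub : <<[set g; h]>> \subset <<[set u; v]>>.
Proof.
have Tu : u \in <<[set u; v]>> by rewrite mem_gen // !inE eqxx.
have Tv : v \in <<[set u; v]>> by rewrite mem_gen // !inE eqxx ?orbT.
have -> : h = v * u^-1 * u^-1 by rewrite -tr_huu !mulgK.
rewrite gen_subG !subUset !sub1set tr_g_uv.
by rewrite (groupM Tu Tv) (groupM (groupM Tv (groupVr Tu)) (groupVr Tu)).
Qed.

Lemma tr_u_cent_gh : u \in 'C(<<[set g; h]>>).
Proof.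
apply: (subsetP (centS tr_gh_sub)); apply: (subsetP translations_abelian).
by rewrite mem_gen // !inE eqxx.
Qed.

(* If u^s = 1 then also v^s = 1, so <u,v> has order at most s^2. *)
Lemma translations_card_le (s : nat) : 0 < s -> u ^+ s = 1 ->
  #|<<[set u; v]>>| <= (s * s)%N.
Proof.
move=> s_gt0 us; have ou : #[u] <= s by rewrite dvdn_leq // order_dvdn us.
have ov : #[v] <= s by rewrite tr_v_conj orderJ.
exact: leq_trans (card_gen2_commute tr_uv_comm) (leq_mul ou ov).
Qed.

End Translations.

Lemma gen3_homGrp_s0 (s : nat) (gT : finGroupType) (a b c : gT) :
  coxeter333_rel a b c -> (tr_u a b c) ^+ s = 1 ->
  gen3 a b c \homg Grp (x : y : z :
        (x ^+ 2, y ^+ 2, z ^+ 2, (x * y) ^+ 3, (x * z) ^+ 3, (y * z) ^+ 3,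
         (x * y * z * y) ^+ s)).
Proof.
move=> [[a2 b2 c2] [ab ac bc]] us; apply/existsP; exists (a, b, c).
by rewrite /= !xpair_eqE /= -gen3E a2 b2 c2 ab ac bc -/(tr_u a b c) us !eqxx.
Qed.

Lemma gen3_homGrp_ss (s : nat) (gT : finGroupType) (a b c : gT) :
  coxeter333_rel a b c -> (a * b * c) ^+ (2 * s)%N = 1 ->
  gen3 a b c \homg Grp (x : y : z :
        (x ^+ 2, y ^+ 2, z ^+ 2, (x * y) ^+ 3, (x * z) ^+ 3, (y * z) ^+ 3,
         (x * y * z) ^+ (2 * s)%N)).
Proof.
move=> [[a2 b2 c2] [ab ac bc]] gs; apply/existsP; exists (a, b, c).
by rewrite /= !xpair_eqE /= -gen3E a2 b2 c2 ab ac bc gs !eqxx.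
Qed.

Section Diagonal.
Variables (gT mT : finGroupType).

Lemma pairX (x : gT) (y : mT) k : (x, y) ^+ k = (x ^+ k, y ^+ k).
Proof. by elim: k => [|k IH] //; rewrite !expgS IH. Qed.

Lemma coxeter333_pair (a b c : gT) (x y z : mT) :
  coxeter333_rel a b c -> coxeter333_rel x y z ->
  coxeter333_rel (a, x) (b, y) (c, z).
Proof.
move=> [[a2 b2 c2] [ab ac bc]] [[x2 y2 z2] [xy xz yz]].
by split; split; rewrite /= pairX ?a2 ?b2 ?c2 ?ab ?ac ?bc ?x2 ?y2 ?z2 ?xy ?xz ?yz.
Qed.

Variables (a b c : gT) (x y z : mT).

Lemma fst_gen3 : fst @* gen3 (a, x) (b, y) (c, z) = gen3 a b c.
Proof.
by rewrite morphim_gen ?subsetT // morphimEsub ?subsetT // !imsetU !imset_set1.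
Qed.

(* If the diagonal group <(a,x),(b,y),(c,z)> is no larger than <a,b,c>
   (e.g. because it is a quotient of it), then a,b,c |-> x,y,z extends to a
   morphism: the first projection is injective on the diagonal group. *)
Lemma gen3_transfer : gen3 (a, x) (b, y) (c, z) \homg gen3 a b c ->
  exists phi : {morphism gen3 a b c >-> mT},
    [/\ phi a = x, phi b = y & phi c = z].
Proof.
set H := gen3 (a, x) (b, y) (c, z) => homHG.
pose f := restrm (subsetT H) [morphism of @fst gT mT].
have fH : f @* H = gen3 a b c by rewrite morphim_restrm setIid fst_gen3.
have injf : 'injm f.
  apply/injmP/imset_injP; rewrite eqn_leq leq_imset_card -morphimEdom fH.
  exact/dvdn_leq/card_homg.
pose phi u := (invm injf u).2.
have phiM : {in gen3 a b c &, {morph phi : u v / u * v}}.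
  by rewrite -fH => u v Hu Hv; rewrite /phi morphM.
exists (Morphism phiM).
have invE w : w \in [set (a, x); (b, y); (c, z)] -> (invm injf w.1).2 = w.2.
  by move=> Sw; rewrite -[w.1]/(f w) invmE // mem_gen.
split; [apply: (invE (a, x)) | apply: (invE (b, y)) | apply: (invE (c, z))];
  by rewrite !inE eqxx ?orbT.
Qed.

End Diagonal.

Lemma G_s0_morphism (s : nat) (gT mT : finGroupType) (a b c : gT) (x y z : mT) :
  is_G_s0 s a b c -> coxeter333_rel x y z -> (tr_u x y z) ^+ s = 1 ->
  exists phi : {morphism gen3 a b c >-> mT},
    [/\ phi a = x, phi b = y & phi c = z].
Proof.
case=> rel us iso relM usM; apply: gen3_transfer; rewrite iso.
by apply: gen3_homGrp_s0; [exact: coxeter333_pair | rewrite /= pairX us usM].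
Qed.

Lemma G_ss_morphism (s : nat) (gT mT : finGroupType) (a b c : gT) (x y z : mT) :
  is_G_ss s a b c -> coxeter333_rel x y z -> (x * y * z) ^+ (2 * s)%N = 1 ->
  exists phi : {morphism gen3 a b c >-> mT},
    [/\ phi a = x, phi b = y & phi c = z].
Proof.
case=> rel gs iso relM gsM; apply: gen3_transfer; rewrite iso.
by apply: gen3_homGrp_ss; [exact: coxeter333_pair | rewrite /= pairX gs gsM].
Qed.

Section MorphTranslations.
Variables (gT mT : finGroupType) (a b c : gT) (x y z : mT).
Variable phi : {morphism gen3 a b c >-> mT}.
Hypotheses (phi_a : phi a = x) (phi_b : phi b = y) (phi_c : phi c = z).

Let Ga : a \in gen3 a b c. Proof. by case: (gen3_mem a b c). Qed.
Let Gb : b \in gen3 a b c. Proof. by case: (gen3_mem a b c). Qed.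
Let Gc : c \in gen3 a b c. Proof. by case: (gen3_mem a b c). Qed.

Lemma gen3_translations :
  [/\ tr_u a b c \in gen3 a b c, tr_v a b c \in gen3 a b c,
      tr_g a b c \in gen3 a b c & tr_h a b c \in gen3 a b c].
Proof. by split; rewrite /tr_u /tr_v /tr_h /tr_g ?groupM ?groupX. Qed.

Lemma morph_translations :
  [/\ phi (tr_u a b c) = tr_u x y z, phi (tr_v a b c) = tr_v x y z,
      phi (tr_g a b c) = tr_g x y z & phi (tr_h a b c) = tr_h x y z].
Proof.
by split; rewrite /tr_u /tr_v /tr_h /tr_g ?morphX ?morphM ?groupM ?groupX
  ?phi_a ?phi_b ?phi_c.
Qed.

End MorphTranslations.

Section AbelianTransitive.
Variables (X : finType) (T : {group {perm X}}).
Hypothesis trT : [transitive T, on [set: X] | 'P].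

Lemma cent_perm_eq (p q : {perm X}) (x : X) :
  p \in 'C(T) -> q \in 'C(T) -> p x = q x -> p = q.
Proof.
move=> /centP cp /centP cq pq; apply/permP => y.
have [t Tt ->] := atransP2 trT (in_setT x) (in_setT y).
by rewrite /= -!permM -(cp t Tt) -(cq t Tt) !permM pq.
Qed.

Hypothesis abT : abelian T.

Lemma abelian_transitive_cent : 'C(T) \subset T.
Proof.
apply/subsetP => p cTp; have /imsetP[x _ _] := trT.
have [t Tt tx] := atransP2 trT (in_setT x) (in_setT (p x)).
by rewrite (cent_perm_eq cTp (subsetP abT t Tt) tx).
Qed.

(* ... and it acts regularly, so its order is the number of points. *)
Lemma abelian_transitive_card : #|X| = #|T|.
Proof.
have /imsetP[x _ _] := trT.
rewrite -cardsT -(atransP trT x (in_setT x)) card_orbit.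
suff -> : 'C_T[x | 'P] = 1 by rewrite indexg1.
apply/trivgP/subsetP => t /setIP[Tt /astab1P tx]; rewrite inE.
apply/eqP/(cent_perm_eq (x := x) (subsetP abT t Tt) (group1 _)).
by rewrite perm1.
Qed.

End AbelianTransitive.

Section AffineModel.
Variable s : nat.
Hypothesis s_gt1 : 1 < s.
Local Notation P := ('Z_s * 'Z_s)%type.
Local Open Scope ring_scope.

(* The affine reflections of (Z/s)^2 realising G_(s,0): rho0, rho1, rho2. *)
Definition aff0 (p : P) : P := (1 - p.1 - p.2, p.2).
Definition aff1 (p : P) : P := (p.2, p.1).
Definition aff2 (p : P) : P := (p.1, - p.1 - p.2).

Lemma aff0K : involutive aff0.
Proof. by case=> x y; rewrite /aff0 /=; congr pair; ring. Qed.
Lemma aff1K : involutive aff1. Proof. by case. Qed.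
Lemma aff2K : involutive aff2.
Proof. by case=> x y; rewrite /aff2 /=; congr pair; ring. Qed.

Definition m0 : {perm P} := perm (inv_inj aff0K).
Definition m1 : {perm P} := perm (inv_inj aff1K).
Definition m2 : {perm P} := perm (inv_inj aff2K).

Lemma perm_invol_sq (f : P -> P) (fK : involutive f) :
  (perm (inv_inj fK) ^+ 2)%g = 1%g.
Proof. by apply/permP => p; rewrite expgS expg1 permM !permE fK ?perm1. Qed.

Lemma affine_rel : coxeter333_rel m0 m1 m2.
Proof.
split; first by split; apply: perm_invol_sq.
by split; apply/permP => -[x y];
  rewrite !expgS expg0 mulg1 !permM !permE ?perm1 /aff0 /aff1 /aff2 /=;
  congr pair; ring.
Qed.

Lemma affine_uX k p : (tr_u m0 m1 m2 ^+ k)%g p = (p.1 - k%:R, p.2).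
Proof.
elim: k p => [|k IH] [x y]; first by rewrite expg0 perm1 subr0.
rewrite expgSr permM IH !permM !permE /aff0 /aff1 /aff2 /=.
by congr pair; rewrite mulrSr; ring.
Qed.

Lemma affine_vX k p : (tr_v m0 m1 m2 ^+ k)%g p = (p.1, p.2 - k%:R).
Proof.
elim: k p => [|k IH] [x y]; first by rewrite expg0 perm1 subr0.
rewrite expgSr permM IH !permM !permE /aff0 /aff1 /aff2 /=.
by congr pair; rewrite mulrSr; ring.
Qed.

Lemma affine_us : (tr_u m0 m1 m2 ^+ s)%g = 1%g.
Proof. by apply/permP => -[x y]; rewrite affine_uX perm1 pchar_Zp // subr0. Qed.

(* The translations act transitively on the s^2 points, so there are at
   least s^2 of them. *)
Lemma affine_translations_card :
  (s * s <= #|<<[set tr_u m0 m1 m2; tr_v m0 m1 m2]>>|)%N.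
Proof.
set u := tr_u m0 m1 m2; set v := tr_v m0 m1 m2.
have -> : (s * s)%N = #|[set: P]| by rewrite cardsT card_prod card_ord Zp_cast.
apply: leq_trans (leq_imset_card (fun t : {perm P} => t^-1%g (0, 0)) _).
apply/subset_leq_card/subsetP => -[x y] _; apply/imsetP.
exists (u ^+ x * v ^+ y)%g; first by rewrite groupM ?groupX ?mem_gen // !inE eqxx ?orbT.
by rewrite -{1}[(x, y)](permK (u ^+ x * v ^+ y)%g) permM affine_uX affine_vX /=
  !natr_Zp !subrr.
Qed.

End AffineModel.

Lemma degenerate_triple (gT : finGroupType) (a c : gT) :
  a ^+ 2 = 1 -> c ^+ 2 = 1 -> (a * c) ^+ 3 = 1 ->
  [/\ coxeter333_rel a a c, forall s, (a * a * c) ^+ (2 * s)%N = 1,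
      tr_g a a c = 1, tr_h a a c = 1 & tr_u a a c = c * a].
Proof.
move=> a2 c2 ac3; have aa : a * a = 1 by rewrite -expg2.
have g1 : tr_g a a c = 1 by rewrite /tr_g aa mul1g.
split=> [||||] //; first by split; split; rewrite ?aa ?expg1n.
- by move=> s; rewrite aa mul1g expgM c2 expg1n.
- by rewrite /tr_h g1 mulg1.
by rewrite /tr_u aa mul1g.
Qed.

Definition s3_a : {perm 'I_3} := tperm (@Ordinal 3 0 isT) (@Ordinal 3 1 isT).
Definition s3_c : {perm 'I_3} := tperm (@Ordinal 3 1 isT) (@Ordinal 3 2 isT).

Lemma s3_a2 : s3_a ^+ 2 = 1. Proof. by rewrite expgS expg1 tperm2. Qed.
Lemma s3_c2 : s3_c ^+ 2 = 1. Proof. by rewrite expgS expg1 tperm2. Qed.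

Lemma s3_ac3 : (s3_a * s3_c) ^+ 3 = 1.
Proof.
apply/permP => i; rewrite !expgS expg0 mulg1 !permM !permE.
by case: i => [[|[|[|]]] ?] //=; apply: val_inj.
Qed.

Lemma s3_ca_neq1 : s3_c * s3_a != 1.
Proof. by apply/eqP => /permP /(_ ord0); rewrite !permM !permE. Qed.

(* In G_(s,0) the translation group has order exactly s^2: it maps onto the
   translations of the affine model. *)
Lemma G_s0_translations_card (s : nat) (gT : finGroupType) (a b c : gT) :
  1 < s -> is_G_s0 s a b c -> #|<<[set tr_u a b c; tr_v a b c]>>| = (s ^ 2)%N.
Proof.
move=> s_gt1 G_s0; have [rel us _] := G_s0.
apply/eqP; rewrite -mulnn eqn_leq translations_card_le ?(ltnW s_gt1) //=.
have [phi [pa pb pc]] := G_s0_morphism G_s0 (affine_rel s) (affine_us s_gt1).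
have [Gu Gv _ _] := gen3_translations a b c.
have [pu pv _ _] := morph_translations pa pb pc.
apply: leq_trans (affine_translations_card s_gt1) _.
by rewrite -pu -pv -morphim_gen2 // leq_morphim.
Qed.

(* In G_(s,s) the translation u is not in <g,h>: in the degenerate S_3 model
   g and h vanish while u does not. *)
Lemma G_ss_u_notin_gh (s : nat) (gT : finGroupType) (a b c : gT) :
  is_G_ss s a b c -> tr_u a b c \notin <<[set tr_g a b c; tr_h a b c]>>.
Proof.
move=> G_ss; apply/negP => uT.
have [rel3 pow3 g3 h3 u3] := degenerate_triple s3_a2 s3_c2 s3_ac3.
have [phi [pa pb pc]] := G_ss_morphism G_ss rel3 (pow3 s).
have [Gu _ Gg Gh] := gen3_translations a b c.
have [pu _ pg ph] := morph_translations pa pb pc.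
have := mem_morphim phi Gu uT.
rewrite morphim_gen2 // pu pg ph u3 g3 h3 setUid -/(cycle 1) cycle1 inE.
exact/negP/s3_ca_neq1.
Qed.

Theorem mainTheorem5 (s n : nat) (r0 r1 r2 : {perm 'I_n}) :
  2 <= s ->
  [transitive gen3 r0 r1 r2, on [set: 'I_n] | 'P] ->
  (is_G_s0 s r0 r1 r2 /\
     [transitive <<[set tr_u r0 r1 r2; tr_v r0 r1 r2]>>, on [set: 'I_n] | 'P])
  \/
  (is_G_ss s r0 r1 r2 /\
     [transitive <<[set tr_g r0 r1 r2; tr_h r0 r1 r2]>>, on [set: 'I_n] | 'P]) ->
  is_G_s0 s r0 r1 r2 /\ n = (s ^ 2)%N.
Proof.
move=> s_gt1 _ [[G_s0 trT] | [G_ss trT]].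
  have [rel _ _] := G_s0; split=> //.
  rewrite -[n]card_ord (abelian_transitive_card trT (translations_abelian rel)).
  exact: G_s0_translations_card.
(* <g,h> would be abelian and transitive, hence contain its centraliser. *)
have [rel _ _] := G_ss; have abT := abelianS (tr_gh_sub rel) (translations_abelian rel).
have uT := subsetP (abelian_transitive_cent trT abT) _ (tr_u_cent_gh rel).
by have := G_ss_u_notin_gh G_ss; rewrite uT.
Qed.
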